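(* Let $X$ be a set of pointed Kripke models, $\Lambda$ a normal modal logic sound with respect to $X$, and $D\subseteq\boldsymbol{\mathcal{L}}_{\Lambda}$ any descriptor for $X$. Then the space $(X_D,\mathcal{T}_D)$ is totally disconnected.
   Context: Signature: countable non-empty sets $\Phi$, $\mathcal{I}$; $\mathcal{L}$: $\varphi ::= \top\mid p\mid\neg\varphi\mid\varphi\wedge\varphi\mid\Box_i\varphi$ on pointed Kripke models, standard semantics. $\boldsymbol{\varphi}$: formulas $\Lambda$-provably equivalent to $\varphi$; $\boldsymbol{\mathcal{L}}_{\Lambda}=\{\boldsymbol{\varphi}\}$. A descriptor is $D\subseteq\boldsymbol{\mathcal{L}}_{\Lambda}$; $\boldsymbol{x}_D=\{y\in X:\forall\boldsymbol{\varphi}\in D,\ y\models\varphi\iff x\models\varphi\}$, $X_D=\{\boldsymbol{x}_D:x\in X\}$. The Stone-like topology $\mathcal{T}_D$ on $X_D$ is generated by the subbasis of sets $\{\boldsymbol{x}:x\models\varphi\}$ and $\{\boldsymbol{x}:x\models\neg\varphi\}$ for $\boldsymbol{\varphi}\in D$. *)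

From HB Require Import structures.
From mathcomp Require Import all_boot all_order.
From mathcomp Require Import boolp classical_sets topology separation_axioms.
Set Implicit Arguments. Unset Strict Implicit. Unset Printing Implicit Defensive.
Local Open Scope classical_set_scope.

Section Syntax.
Variables (Phi Ag : Type).
Inductive formula : Type :=
| fTop : formula
| fVar : Phi -> formula
| fNeg : formula -> formula
| fAnd : formula -> formula -> formula
| fBox : Ag -> formula -> formula.
End Syntax.
Arguments fTop {Phi Ag}.

HB.instance Definition _ (Phi Ag : Type) := gen_eqMixin (formula Phi Ag).
HB.instance Definition _ (Phi Ag : Type) := gen_choiceMixin (formula Phi Ag).
HB.instance Definition _ (Phi Ag : Type) := isPointed.Build (formula Phi Ag) fTop.

Section Kripke.
Variables (Phi Ag : countType).
Local Notation form := (formula Phi Ag).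

Definition fImp (a b : form) : form := fNeg (fAnd a (fNeg b)).
Definition fIff (a b : form) : form := fAnd (fImp a b) (fImp b a).

Record kripke := Kripke {
  world : Type;
  krel : Ag -> world -> world -> Prop;
  kval : Phi -> world -> Prop }.

Record pointed := Pointed { pmodel : kripke; ppoint : world pmodel }.

Fixpoint sat (M : kripke) (w : world M) (f : form) : Prop :=
  match f with
  | fTop => True
  | fVar p => kval p w
  | fNeg a => ~ sat w a
  | fAnd a b => sat w a /\ sat w b
  | fBox i a => forall v, krel i w v -> sat v a
  end.

Definition psat (x : pointed) (f : form) : Prop := sat (ppoint x) f.

(* propositional tautologies: boxed subformulas are treated as atoms *)
Fixpoint peval (v : form -> bool) (f : form) : bool :=
  match f with
  | fTop => true
  | fVar _ => v f
  | fNeg a => ~~ peval v a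
  | fAnd a b => peval v a && peval v b
  | fBox _ _ => v f
  end.
Definition tautology (f : form) := forall v, peval v f = true.

Fixpoint subst (s : Phi -> form) (f : form) : form :=
  match f with
  | fTop => fTop
  | fVar p => s p
  | fNeg a => fNeg (subst s a)
  | fAnd a b => fAnd (subst s a) (subst s b)
  | fBox i a => fBox i (subst s a)
  end.

Definition normal_logic (L : set form) : Prop :=
  [/\ (forall f, tautology f -> L f),
      (forall i a b, L (fImp (fBox i (fImp a b)) (fImp (fBox i a) (fBox i b)))),
      (forall a b, L (fImp a b) -> L a -> L b),
      (forall i a, L a -> L (fBox i a)) &
      (forall s a, L a -> L (subst s a))].

Definition sound (L : set form) (X : set pointed) : Prop :=
  forall f x, L f -> X x -> psat x f.

Definition fclass (L : set form) (f : form) : set form := [set g | L (fIff f g)].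
Definition Lclasses (L : set form) : set (set form) := [set fclass L f | f in setT].

Definition descriptor (L : set form) (D : set (set form)) := D `<=` Lclasses L.

Definition xD (L : set form) (X : set pointed) (D : set (set form)) (x : pointed)
  : set pointed :=
  [set y | X y /\ forall f, D (fclass L f) -> (psat y f <-> psat x f)].

Definition XD_set (L : set form) (X : set pointed) (D : set (set form))
  : set (set pointed) := [set xD L X D x | x in X].

Definition XD (L : set form) (X : set pointed) (D : set (set form)) :=
  {A : set pointed | XD_set L X D A}.

HB.instance Definition _ L X D := gen_eqMixin (XD L X D).
HB.instance Definition _ L X D := gen_choiceMixin (XD L X D).

(* subbasis: index (f, true) gives {x_D : x |= f}, (f, false) gives {x_D : x |= ~f},
   for [f] in D *)
Definition XD_subbase_dom (L : set form) (D : set (set form)) : set (form * bool) :=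
  [set fb | D (fclass L fb.1)].
Definition XD_subbase (L : set form) (X : set pointed) (D : set (set form))
  (fb : form * bool) : set (XD L X D) :=
  [set A | exists2 x, X x /\ sval A = xD L X D x &
     psat x (if fb.2 then fb.1 else fNeg fb.1)].

HB.instance Definition _ L X D :=
  isSubBaseTopological.Build (XD L X D) (@XD_subbase_dom L D) (@XD_subbase L X D).

End Kripke.

(* Each subbasic set {x_D : x |= f} has the subbasic set {x_D : x |= ~f} as its
   complement, so all subbasic sets are clopen. Two distinct classes x_D != y_D
   disagree on some formula f with [f] in D, and the clopen set {x_D : x |= f}
   separates them. The space is therefore zero-dimensional, hence totally
   disconnected. *)

From mathcomp Require Import all_boot boolp classical_sets topology separation_axioms.
Local Open Scope classical_set_scope.

Section DescriptorSpace.
Set Implicit Arguments. Unset Strict Implicit.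

Variables (Phi Ag : countType) (X : set (pointed Phi Ag)) (L : set (formula Phi Ag))
  (D : set (set (formula Phi Ag))).

Local Notation xD := (xD L X D).
Local Notation XD := (XD L X D).
Local Notation subbase := (@XD_subbase _ _ L X D).

Lemma xD_refl x : X x -> xD x x.
Proof. by split. Qed.

Lemma xD_agree x y f : X y -> xD x = xD y -> D (fclass L f) ->
  (psat x f <-> psat y f).
Proof.
move=> Xy Exy Df; have [_ Eyx] : xD x y by rewrite Exy; exact: xD_refl.
exact: iff_sym (Eyx f Df).
Qed.

Lemma xD_ext x y : (forall f, D (fclass L f) -> (psat x f <-> psat y f)) ->
  xD x = xD y.
Proof.
move=> Exy; apply/seteqP; split=> z [Xz Ez]; split=> // f Df.
  by rewrite Ez // Exy.
by rewrite Ez // -Exy.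
Qed.

Lemma XD_repr (A : XD) : exists2 x, X x & sval A = xD x.
Proof. by case: (svalP A) => x Xx <-; exists x. Qed.

Lemma in_XD_subbase (A : XD) x f b : X x -> sval A = xD x -> D (fclass L f) ->
  subbase (f, b) A <-> psat x (if b then f else fNeg f).
Proof.
move=> Xx Ax Df; split=> [[x' [Xx' Ax']] | ]; last by exists x.
have Ex := xD_agree Xx (etrans (esym Ax') Ax) Df.
by case: b; rewrite /psat /= -/(psat x' f) -/(psat x f) Ex.
Qed.

Lemma open_XD_subbase fb : XD_subbase_dom L D fb -> open (subbase fb).
Proof.
move=> Dfb; exists [set subbase fb]; last by rewrite bigcup_set1.
by move=> _ ->; exact: finI_from1.
Qed.

Lemma XD_subbaseC f : D (fclass L f) -> ~` subbase (f, true) = subbase (f, false).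
Proof.
move=> Df; apply/seteqP; split=> A; have [x Xx Ax] := XD_repr A;
  by rewrite /= (in_XD_subbase _ Xx Ax Df) (in_XD_subbase _ Xx Ax Df).
Qed.

Lemma clopen_XD_subbase f : D (fclass L f) -> clopen (subbase (f, true)).
Proof.
move=> Df; split; first exact: open_XD_subbase.
by rewrite -openC XD_subbaseC //; exact: open_XD_subbase.
Qed.

Lemma XD_separated (A B : XD) : A != B ->
  exists2 f, D (fclass L f) & ~ (subbase (f, true) A <-> subbase (f, true) B).
Proof.
have [x Xx Ax] := XD_repr A; have [y Xy By] := XD_repr B.
move=> AB; apply: contrapT => nsep; move/eqP: AB; apply.
apply: eq_sig_hprop => [? ? ?|]; first exact: Prop_irrelevance.
rewrite Ax By; apply: xD_ext => f Df.
rewrite -(in_XD_subbase true Xx Ax Df) -(in_XD_subbase true Xy By Df).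
by apply: contrapT => nE; apply: nsep; exists f.
Qed.

Lemma XD_zero_dimensional : zero_dimensional XD.
Proof.
move=> A B /XD_separated [f Df nE]; set U := subbase (f, true).
have U_clopen : clopen U := clopen_XD_subbase Df.
have [UA | nUA] := pselect (U A).
  by exists U; split=> // UB; apply: nE.
exists (~` U); split=> //; first exact: clopenC.
by move=> nUB; apply: nE; split=> [/nUA | /nUB].
Qed.

End DescriptorSpace.

Theorem proposition21 (Phi Ag : countType) (hPhi : inhabited Phi) (hAg : inhabited Ag)
  (X : set (pointed Phi Ag)) (L : set (formula Phi Ag))
  (HL : normal_logic L) (Hsound : sound L X)
  (D : set (set (formula Phi Ag))) (HD : descriptor L D) :
  totally_disconnected [set: XD L X D].
Proof. exact/zero_dimension_totally_disconnected/XD_zero_dimensional. Qed.
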